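(* Let $G=(V,E)$ be a doubly stochasticable strongly connected digraph. Then $\max\{\max_{v\in V}d_{\mathrm{out}}(v),\max_{v\in V}d_{\mathrm{in}}(v)\}\leq\operatorname{ds}(G)\leq|E|-|V|+1.$
   Context: A digraph $G=(V,E)$, $V=\{v_1,\dots,v_n\}$, $E\subseteq V\times V$ (self-loops allowed); $d_{\mathrm{out}}(v)$ and $d_{\mathrm{in}}(v)$ are the numbers of out-neighbors and in-neighbors of $v$. Strongly connected means a directed path exists between every ordered pair of distinct vertices. $G$ is doubly stochasticable if it admits $A\in\mathbb{R}^{n\times n}_{\geq0}$ with $a_{ij}>0$ iff $(v_i,v_j)\in E$ and all row and column sums equal $1$. A cycle is a directed path $v_{i_1},\dots,v_{i_k},v_{i_1}$ with distinct $v_{i_1},\dots,v_{i_k}$ (self-loops are cycles), viewed as a subdigraph; $\mathcal{C}(G)$ is the set of subdigraphs that are a single edgeless vertex, a cycle, or a union of pairwise vertex-disjoint cycles; a family generates $G$ if the union of vertex sets is $V$ and of edge sets is $E$. The DS-character $\operatorname{ds}(G)$ is the minimum cardinality of a subset of $\mathcal{C}(G)$ generating $G$ all of whose elements contain every vertex of $G$. *)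

From HB Require Import structures.
From mathcomp Require Import all_boot all_order all_algebra.
From mathcomp Require Import reals.
Set Implicit Arguments. Unset Strict Implicit. Unset Printing Implicit Defensive.
Import Order.TTheory GRing.Theory Num.Theory.

(* A digraph G = (V, E): vertices are the elements of a finite type V,
   edges a set E of ordered pairs (self-loops allowed). *)

Definition d_out (V : finType) (E : {set V * V}) (v : V) : nat :=
  #|[set w | (v, w) \in E]|.
Definition d_in (V : finType) (E : {set V * V}) (v : V) : nat :=
  #|[set w | (w, v) \in E]|.

Definition edge_rel (V : finType) (E : {set V * V}) : rel V :=
  fun x y => (x, y) \in E.

Definition strongly_connected (V : finType) (E : {set V * V}) : Prop :=
  forall u v : V, u != v -> connect (edge_rel E) u v.

Definition ds_able (R : realType) (V : finType) (E : {set V * V}) : Prop :=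
  exists A : V -> V -> R,
    [/\ forall i j, 0 <= A i j,
        forall i j, (0 < A i j) <-> ((i, j) \in E),
        forall i, \sum_(j : V) A i j = 1
      & forall j, \sum_(i : V) A i j = 1]%R.

Definition subdigraph (V : finType) := ({set V} * {set V * V})%type.

(* The cycle v_{i_1}, ..., v_{i_k}, v_{i_1} given by a duplicate-free nonempty
   sequence s, viewed as subdigraph: vertices of s, edges (x, next s x). *)
Definition cycle_of (V : finType) (s : seq V) : subdigraph V :=
  ([set x in s], [set (x, next s x) | x in s]).

Definition is_cycle_seq (V : finType) (E : {set V * V}) (s : seq V) : bool :=
  [&& s != [::], uniq s & (cycle_of s).2 \subset E].

(* C(G): a single edgeless vertex, or a union of (one or more) pairwise
   vertex-disjoint cycles of G. *)
Definition in_CG (V : finType) (E : {set V * V}) (H : subdigraph V) : Prop :=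
  (exists v : V, H = ([set v], set0))
  \/ (exists ss : seq (seq V),
        [/\ ss != [::],
            all (is_cycle_seq E) ss,
            (forall i j, (i < size ss)%N -> (j < size ss)%N -> i != j ->
               [disjoint [set x in nth [::] ss i] & [set x in nth [::] ss j]])
          & H = (\bigcup_(s <- ss) (cycle_of s).1,
                 \bigcup_(s <- ss) (cycle_of s).2)]).

Definition ds_family (V : finType) (E : {set V * V})
    (S : {set subdigraph V}) : Prop :=
  [/\ forall H, H \in S -> in_CG E H,
      forall H, H \in S -> H.1 = [set: V],
      \bigcup_(H in S) H.1 = [set: V]
    & \bigcup_(H in S) H.2 = E].

Definition is_ds (V : finType) (E : {set V * V}) (k : nat) : Prop :=
  (exists S, ds_family E S /\ #|S| = k)
  /\ (forall S, ds_family E S -> (k <= #|S|)%N).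

From HB Require Import structures.
From mathcomp Require Import all_boot all_order all_algebra.
From mathcomp Require Import reals.
From mathcomp Require Import fingroup perm zify.
From Stdlib Require Import Classical Wf_nat.
Set Implicit Arguments. Unset Strict Implicit. Unset Printing Implicit Defensive.
Import Order.TTheory GRing.Theory Num.Theory.

(* A doubly stochastic matrix supported on E has, by Hall's theorem, a
   permutation in its support; subtracting the smallest entry along it and
   recursing (Birkhoff's argument) shows that every edge of E lies on some
   permutation s with all (x, s x) in E.  The graph of such an s is the
   disjoint union of the cycles of s, a spanning member of C(G) with exactly
   |V| edges.  Adding these digraphs greedily, each through a still uncovered
   edge, covers E with at most |E| - |V| + 1 of them.  Conversely a member of
   C(G) has in- and out-degree at most 1, so the edges at a vertex v need
   d_out(v) (resp. d_in(v)) distinct members. *)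

Section Hall.
Variables (T U : finType) (r : T -> U -> bool) (u0 : U).
Implicit Types (A X Y : {set T}) (B : {set U}).

Definition nbh (X : {set T}) : {set U} := [set y | [exists x in X, r x y]].

Definition hall_condition (A : {set T}) (B : {set U}) :=
  forall X : {set T}, X \subset A -> #|X| <= #|nbh X :&: B|.

Definition matching_into (A : {set T}) (B : {set U}) :=
  exists2 f : T -> U, {in A &, injective f}
    & {in A, forall x, f x \in B /\ r x (f x)}.

Lemma mem_nbh X x y : x \in X -> r x y -> y \in nbh X.
Proof. by move=> Xx rxy; rewrite inE; apply/existsP; exists x; rewrite Xx. Qed.

Lemma nbhU X Y : nbh (X :|: Y) = nbh X :|: nbh Y.
Proof.
apply/setP=> y; rewrite !inE; apply/existsP/orP => [[x]|].
  by rewrite inE => /andP[/orP[] Zx rxy]; [left|right]; apply/existsP; exists x; rewrite Zx.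
by case=> /existsP[x /andP[Zx rxy]]; exists x; rewrite inE Zx ?orbT.
Qed.

Lemma matching_into_set0 B : matching_into set0 B.
Proof. by exists (fun=> u0) => [x|x]; rewrite inE. Qed.

Lemma matching_into_set1 a b : r a b -> matching_into [set a] [set b].
Proof. by exists (fun=> b) => [x y /set1P-> /set1P->|x /set1P->]; rewrite ?set11. Qed.

Lemma matching_into_nbh A B : matching_into A B -> matching_into A (nbh A :&: B).
Proof.
case=> f inj_f Af; exists f => // x Ax; have [Bfx rxfx] := Af x Ax.
by rewrite inE (mem_nbh Ax rxfx).
Qed.

Lemma matching_into_subr A B B' :
  B \subset B' -> matching_into A B -> matching_into A B'.
Proof.
move=> /subsetP sBB' [f inj_f Af]; exists f => // x /Af[Bfx rxfx].
by split; first exact: sBB'.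
Qed.

Lemma matching_intoU A1 A2 B1 B2 : [disjoint B1 & B2] ->
  matching_into A1 B1 -> matching_into A2 B2 ->
  matching_into (A1 :|: A2) (B1 :|: B2).
Proof.
move=> dB [f1 inj1 A1f1] [f2 inj2 A2f2].
exists (fun x => if x \in A1 then f1 x else f2 x) => [x y|x]; rewrite !inE.
  case A1x: (x \in A1); case A1y: (y \in A1) => //= A2x A2y.
  - exact: inj1.
  - move=> e; have [B1x _] := A1f1 x A1x; have [B2y _] := A2f2 y A2y.
    by rewrite e (disjointFl dB B2y) in B1x.
  - move=> e; have [B1y _] := A1f1 y A1y; have [B2x _] := A2f2 x A2x.
    by rewrite -e (disjointFl dB B2x) in B1y.
  - exact: inj2.
case A1x: (x \in A1) => /= A12x; first by have [-> ->] := A1f1 x A1x.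
by have [-> ->] := A2f2 x A12x; rewrite orbT.
Qed.

Lemma hall_condition_sub A X B :
  X \subset A -> hall_condition A B -> hall_condition X B.
Proof. by move=> sXA hA Y sYX; apply/hA/(subset_trans sYX). Qed.

Lemma hall_condition_tight A B X : hall_condition A B -> X \subset A ->
  #|nbh X :&: B| <= #|X| -> hall_condition (A :\: X) (B :\: nbh X).
Proof.
move=> hA sXA tightX Y sYAX.
have dYX : [disjoint Y & X].
  by rewrite disjoints_subset (subset_trans sYAX) // setDE subsetIr.
have := hA (Y :|: X); rewrite subUset sXA (subset_trans sYAX (subsetDl _ _)).
move=> /(_ isT); rewrite cardsU (disjoint_setI0 dYX) cards0 subn0 nbhU.
have sN : (nbh Y :|: nbh X) :&: B \subset nbh Y :&: (B :\: nbh X) :|: nbh X :&: B.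
  apply/subsetP=> y; rewrite !(in_setI, in_setU, in_setD).
  by case: (y \in nbh X); case: (y \in B); case: (y \in nbh Y).
by have := subset_leq_card sN; rewrite cardsU; lia.
Qed.

Lemma hall_condition_slack A B a b : a \in A ->
  (forall X, X \proper A -> X != set0 -> #|X| < #|nbh X :&: B|) ->
  hall_condition (A :\ a) (B :\ b).
Proof.
move=> Aa slackA Y sYAa; have [->|Y0] := eqVneq Y set0; first by rewrite cards0.
have pYA : Y \proper A.
  rewrite properE (subset_trans sYAa (subsetDl _ _)); apply/subsetPn; exists a => //.
  by apply: contraT => /negbNE /(subsetP sYAa); rewrite !inE eqxx.
have sN : nbh Y :&: B \subset nbh Y :&: (B :\ b) :|: [set b].
  apply/subsetP=> y; rewrite !(in_setI, in_setU, in_setD1, in_set1).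
  by case: (y == b); case: (y \in B); case: (y \in nbh Y).
by have := subset_leq_card sN; have := slackA Y pYA Y0; rewrite cardsU cards1; lia.
Qed.

Theorem hall A B : hall_condition A B -> matching_into A B.
Proof.
move: {2}_.+1 (ltnSn #|A|) => n; elim: n A B => // n IH A B ltAn hA.
have [/existsP[X /and3P[pXA X0 tightX]]|/existsPn slackA] :=
  boolP [exists X : {set T}, [&& X \proper A, X != set0 & #|nbh X :&: B| <= #|X|]].
  have sXA := proper_sub pXA.
  have mX : matching_into X (nbh X :&: B).
    apply/matching_into_nbh/IH; last exact: hall_condition_sub hA.
    by have := proper_card pXA; lia.
  have mAX : matching_into (A :\: X) (B :\: nbh X).
    apply: IH; last exact: hall_condition_tight.
    have X_gt0 : 0 < #|X| by rewrite card_gt0.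
    by rewrite cardsDS //; have := subset_leq_card sXA; lia.
  have dN : [disjoint nbh X :&: B & B :\: nbh X].
    rewrite disjoints_subset setDE setCI setCK.
    by apply/subsetU; rewrite subsetIl orbT.
  have := matching_intoU dN mX mAX.
  rewrite -{1}(setIidPr sXA) setID; apply: matching_into_subr.
  by rewrite subUset subsetIr subsetDl.
have [->|[a Aa]] := set_0Vmem A; first exact: matching_into_set0.
have [b] : exists b, b \in nbh [set a] :&: B.
  by apply/set0Pn; rewrite -card_gt0; have := hA [set a]; rewrite sub1set Aa cards1; apply.
rewrite !inE => /andP[/existsP[a' /andP[/set1P-> rab]] Bb].
have mAa : matching_into (A :\ a) (B :\ b).
  apply: IH; first by move: ltAn; rewrite (cardsD1 a A) Aa; lia.
  apply: hall_condition_slack => // X pXA X0; have := slackA X.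
  by rewrite pXA X0 /= -ltnNge.
have db : [disjoint [set b] & B :\ b] by rewrite disjoints1 !inE eqxx.
by have := matching_intoU db (matching_into_set1 rab) mAa; rewrite !setD1K.
Qed.

End Hall.

Section Semimagic.
Variables (R : realDomainType) (V : finType).
Local Open Scope ring_scope.
Implicit Types (A : V -> V -> R) (c m : R) (s : {perm V}).

Definition semimagic A c := [/\ forall i j, 0 <= A i j,
  forall i, \sum_j A i j = c & forall j, \sum_i A i j = c].

Definition support A : {set V * V} := [set p | 0 < A p.1 p.2].

Lemma semimagic_gt0 A c i j : semimagic A c -> 0 < A i j -> 0 < c.
Proof.
case=> A_ge0 rowA _ Aij_gt0; rewrite -(rowA i) (bigD1 j) //=.
by rewrite ltr_pwDl // sumr_ge0.
Qed.

(* Double counting: the rows of X carry total mass c|X|, all of it inside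
   the columns of nbh X, which carry total mass c|nbh X|. *)
Lemma semimagic_hall A c : semimagic A c -> 0 < c ->
  hall_condition (fun i j => 0 < A i j) [set: V] [set: V].
Proof.
move=> [A_ge0 rowA colA] c_gt0 X _; rewrite setIT -(ler_nat R) -(ler_pM2l c_gt0).
set N := nbh _ X.
have rowX : \sum_(i in X) \sum_j A i j = c * #|X|%:R.
  by rewrite (eq_bigr (fun=> c)) // sumr_const mulr_natr.
have colN : \sum_(j in N) \sum_i A i j = c * #|N|%:R.
  by rewrite (eq_bigr (fun=> c)) // sumr_const mulr_natr.
have rowX_in_N i : i \in X -> \sum_j A i j = \sum_(j in N) A i j.
  move=> Xi; rewrite (bigID (mem N)) /= addrC big1 ?add0r // => j Nj.
  apply/eqP; rewrite eq_le A_ge0 andbT leNgt; apply: contra Nj.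
  exact: mem_nbh.
rewrite -rowX -colN (eq_bigr _ rowX_in_N) exchange_big /=.
apply: ler_sum => j _; rewrite [leRHS](bigID (mem X)) /=.
by rewrite lerDl sumr_ge0.
Qed.

Lemma semimagic_perm A c : semimagic A c -> 0 < c ->
  exists s : {perm V}, forall i, 0 < A i (s i).
Proof.
move=> magicA c_gt0; have [i0 _|V0] := pickP (@predT V); last first.
  by exists 1%g => i; have := V0 i.
have [f inj_f Af] : matching_into (fun i j => 0 < A i j) [set: V] [set: V].
  exact: (hall i0 (semimagic_hall magicA c_gt0)).
have {}inj_f : injective f by move=> x y; apply: inj_f; rewrite inE.
by exists (perm inj_f) => i; rewrite permE; have [] := Af i (in_setT i).
Qed.

Definition perm_drop A s m i j := A i j - (s i == j)%:R * m.

Lemma sum_pick_one (k : V) m : \sum_j (k == j)%:R * m = m.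
Proof.
rewrite (bigD1 k) //= eqxx mul1r big1 ?addr0 // => j.
by rewrite eq_sym => /negbTE->; rewrite mul0r.
Qed.

Lemma semimagic_perm_drop A c s m : semimagic A c ->
  (forall i, m <= A i (s i)) -> semimagic (perm_drop A s m) (c - m).
Proof.
move=> [A_ge0 rowA colA] m_le; split=> [i j|i|j]; rewrite /perm_drop.
- by case: eqP => [<-|_]; rewrite ?mul1r ?subr_ge0 ?mul0r ?subr0.
- by rewrite sumrB rowA sum_pick_one.
rewrite sumrB colA (eq_bigr (fun i => (s^-1%g j == i)%:R * m)) ?sum_pick_one //.
by move=> i _; rewrite (can2_eq (permK s) (permKV s)) eq_sym.
Qed.

Lemma perm_drop_id A s m i j : s i != j -> perm_drop A s m i j = A i j.
Proof. by rewrite /perm_drop => /negbTE->; rewrite mul0r subr0. Qed.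

Lemma support_perm_drop A s m : 0 <= m ->
  support (perm_drop A s m) \subset support A.
Proof.
move=> m_ge0; apply/subsetP=> -[i j]; rewrite !inE /= => /lt_le_trans; apply.
by rewrite /perm_drop lerBlDr lerDl mulr_ge0.
Qed.

Theorem semimagic_perm_through A c i j : semimagic A c -> 0 < A i j ->
  exists2 s : {perm V}, s i = j & forall k, 0 < A k (s k).
Proof.
move: {2}_.+1 (ltnSn #|support A|) => n.
elim: n A c => // n IH A c ltAn magicA Aij.
have [s A_s] := semimagic_perm magicA (semimagic_gt0 magicA Aij).
have [<-|sij] := eqVneq (s i) j; first by exists s.
pose k0 := [arg min_(k < i) A k (s k)]%O.
have m_min k : A k0 (s k0) <= A k (s k).
  by rewrite /k0; case: arg_minP => // k1 _; apply.
set m := A k0 (s k0) in m_min.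
have m_gt0 : 0 < m := A_s k0.
have sub_supp := support_perm_drop A s (ltW m_gt0).
have k0_out : (k0, s k0) \notin support (perm_drop A s m).
  by rewrite inE /perm_drop /= eqxx mul1r subrr ltxx.
have [||t tij A'_t] :=
  IH (perm_drop A s m) (c - m) _ (semimagic_perm_drop magicA m_min).
- have : support (perm_drop A s m) \proper support A.
    rewrite properEneq sub_supp andbT.
    by apply: contraNneq k0_out => ->; rewrite inE.
  by move/proper_card; lia.
- by rewrite perm_drop_id.
exists t => // k; apply: lt_le_trans (A'_t k) _.
by rewrite /perm_drop lerBlDr lerDl mulr_ge0 // ltW.
Qed.

End Semimagic.

Lemma bigcup_seqP (T : finType) (I : eqType) (r : seq I) (F : I -> {set T}) x :
  reflect (exists2 i, i \in r & x \in F i) (x \in \bigcup_(i <- r) F i).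
Proof.
elim: r => [|a r IH]; first by rewrite big_nil inE; constructor=> -[].
rewrite big_cons inE; apply: (iffP orP) => [[Fa|/IH[i ri Fi]]|[i]].
- by exists a; rewrite ?mem_head.
- by exists i; rewrite // inE ri orbT.
by rewrite inE => /orP[/eqP->|ri Fi]; [left|right; apply/IH; exists i].
Qed.

Section CycleUnion.
Variables (V : finType) (E : {set V * V}) (ss : seq (seq V)).
Hypothesis ss_cycles : all (is_cycle_seq E) ss.
Hypothesis ss_disjoint : forall i j, (i < size ss)%N -> (j < size ss)%N ->
  i != j -> [disjoint [set x in nth [::] ss i] & [set x in nth [::] ss j]].

Let edges := \bigcup_(s <- ss) (cycle_of s).2.

Lemma cycles_eq_of_mem s1 s2 x :
  s1 \in ss -> s2 \in ss -> x \in s1 -> x \in s2 -> s1 = s2.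
Proof.
move=> ss1 ss2 s1x s2x; apply: contraTeq isT => s12.
have idx12 : index s1 ss != index s2 ss.
  by apply: contra s12 => /eqP/(congr1 (nth [::] ss)); rewrite !nth_index // => ->.
have := @ss_disjoint (index s1 ss) (index s2 ss); rewrite !index_mem ss1 ss2.
move=> /(_ isT isT idx12) /disjointFr; rewrite !nth_index //.
by move=> /(_ x); rewrite !inE s1x s2x => /(_ isT).
Qed.

Lemma cycle_union_sub : edges \subset E.
Proof.
apply/subsetP=> e /bigcup_seqP[s ss_s se].
by have /and3P[_ _ /subsetP] := allP ss_cycles s ss_s; apply.
Qed.

Lemma cycle_union_out v w w' : (v, w) \in edges -> (v, w') \in edges -> w = w'.
Proof.
move=> /bigcup_seqP[s1 ss1 /imsetP[x1 s1x1 [-> ->]]].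
move=> /bigcup_seqP[s2 ss2 /imsetP[x2 s2x2 [e12 ->]]].
by rewrite e12 in s1x1 *; rewrite (cycles_eq_of_mem ss1 ss2 s1x1 s2x2).
Qed.

Lemma cycle_union_in v w w' : (w, v) \in edges -> (w', v) \in edges -> w = w'.
Proof.
move=> /bigcup_seqP[s1 ss1 /imsetP[x1 s1x1 [-> ->]]].
move=> /bigcup_seqP[s2 ss2 /imsetP[x2 s2x2 [-> e12]]].
have s1v : next s1 x1 \in s1 by rewrite mem_next.
have s2v : next s1 x1 \in s2 by rewrite e12 mem_next.
move: e12 s2x2; rewrite -(cycles_eq_of_mem ss1 ss2 s1v s2v) => e12 _.
have /and3P[_ uniq_s1 _] := allP ss_cycles s1 ss1.
by rewrite -(prev_next uniq_s1 x1) e12 prev_next.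
Qed.

End CycleUnion.

Section PermDigraph.
Variables (V : finType) (E : {set V * V}).

Lemma in_CG_sub H : in_CG E H -> H.2 \subset E.
Proof.
by case=> [[v ->]|[ss [_ cyc _ ->]]]; [rewrite sub0set | exact: (cycle_union_sub cyc)].
Qed.

Lemma in_CG_out H v w w' :
  in_CG E H -> (v, w) \in H.2 -> (v, w') \in H.2 -> w = w'.
Proof.
by case=> [[u ->]|[ss [_ _ dis ->]]]; [rewrite inE | exact: (cycle_union_out dis)].
Qed.

Lemma in_CG_in H v w w' :
  in_CG E H -> (w, v) \in H.2 -> (w', v) \in H.2 -> w = w'.
Proof.
by case=> [[u ->]|[ss [_ cyc dis ->]]]; [rewrite inE | exact: (cycle_union_in cyc dis)].
Qed.

Definition perm_digraph (s : {perm V}) : subdigraph V :=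
  ([set: V], [set (x, s x) | x : V]).

Lemma card_perm_digraph s : #|(perm_digraph s).2| = #|V|.
Proof. by rewrite card_imset // => x y []. Qed.

Lemma next_orbit (s : {perm V}) x y : y \in orbit s x -> next (orbit s x) y = s y.
Proof.
move=> xy; have cyc : fcycle s (orbit s x).
  by apply/injectivePcycle => a b _ _; apply: perm_inj.
by have /eqP <- := next_cycle cyc xy.
Qed.

(* The cycle decomposition of s: one orbit per root of the functional graph. *)
Lemma perm_digraph_in_CG (v0 : V) (s : {perm V}) :
  (forall x, (x, s x) \in E) -> in_CG E (perm_digraph s).
Proof.
move=> sE; right; set rs := enum (froots s).
have sym_s : connect_sym (frel s) := fconnect_sym (@perm_inj _ s).
have orbit_root x : x \in orbit s (froot s x).
  by rewrite -fconnect_orbit sym_s connect_root.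
have rs_root x : froot s x \in rs by rewrite mem_enum; exact: roots_root.
exists [seq orbit s x | x <- rs]; split.
- by apply/eqP => rs0; have := map_f (orbit s) (rs_root v0); rewrite rs0.
- apply/allP => _ /mapP[x _ ->]; rewrite /is_cycle_seq orbit_uniq /=.
  apply/andP; split; first by apply/eqP => o0; have := in_orbit s x; rewrite o0.
  by apply/subsetP => _ /imsetP[y xy ->]; rewrite next_orbit.
- move=> i j; rewrite size_map => ilt jlt ij; rewrite !(nth_map v0) //.
  rewrite -setI_eq0; apply/eqP/setP => y; rewrite !inE -!fconnect_orbit.
  apply/negP => /andP[iy jy]; apply/negP: ij; rewrite negbK.
  have /eqP ri : nth v0 rs i \in froots s by rewrite -mem_enum mem_nth.
  have /eqP rj : nth v0 rs j \in froots s by rewrite -mem_enum mem_nth.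
  rewrite -(nth_uniq v0 ilt jlt (enum_uniq _)) -ri -rj.
  by rewrite (root_connect sym_s) (connect_trans iy) // sym_s.
- congr pair; apply/setP => e.
    rewrite inE; symmetry; apply/bigcup_seqP.
    by exists (orbit s (froot s e)); rewrite ?map_f /= ?inE.
  apply/idP/bigcup_seqP => [/imsetP[x _ ->]|[_ /mapP[r _ ->] /imsetP[y ry ->]]].
    exists (orbit s (froot s x)); first by rewrite map_f.
    by rewrite /= -(next_orbit (orbit_root x)); apply: imset_f.
  by rewrite next_orbit //; apply: imset_f.
Qed.

End PermDigraph.

Section Covers.
Variables (T U : finType).

Lemma card_le_cover (F : {set T}) (S : {set U}) (covers : T -> U -> bool) :
  {in F, forall x, exists2 H, H \in S & covers x H} ->
  (forall H x y, H \in S -> x \in F -> y \in F -> covers x H -> covers y H -> x = y) ->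
  #|F| <= #|S|.
Proof.
move=> coverF cover_uniq; have [->|[x0 Fx0]] := set_0Vmem F; first by rewrite cards0.
have [H0 _ _] := coverF x0 Fx0.
pose h x := odflt H0 [pick H in S | covers x H].
have hP x : x \in F -> h x \in S /\ covers x (h x).
  move=> Fx; rewrite /h; case: pickP => [H /andP[]//|noH].
  by have [H SH xH] := coverF x Fx; have := noH H; rewrite SH xH.
rewrite -(card_in_imset (f := h)); last first.
  move=> x y Fx Fy hxy; have [Shx xhx] := hP x Fx; have [_ yhy] := hP y Fy.
  by apply: cover_uniq Shx Fx Fy xhx _; rewrite hxy.
by apply/subset_leq_card/subsetP => _ /imsetP[x Fx ->]; case: (hP x Fx).
Qed.

Variables (cov : U -> {set T}) (n : nat).

Implicit Types (P S : {set U}).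

Definition cover S := \bigcup_(H in S) cov H.

Lemma cover_subset S1 S2 : S1 \subset S2 -> cover S1 \subset cover S2.
Proof.
move=> sS12; apply/subsetP => x /bigcupP[H S1H Hx].
by apply/bigcupP; exists H => //; apply: (subsetP sS12).
Qed.

(* Each new member of a greedy cover contributes at least one new element. *)
Lemma greedy_cover_from P S : S \subset P -> S != set0 ->
  #|S| + n <= #|cover S| + 1 ->
  exists2 S' : {set U}, S' \subset P &
    [/\ S' != set0, cover S' = cover P & #|S'| + n <= #|cover P| + 1].
Proof.
move: {2}_.+1 (ltnSn #|cover P :\: cover S|) => k.
elim: k S => // k IH S ltk sSP S0 small_S.
have [/eqP|[x PSx]] := set_0Vmem (cover P :\: cover S).
  rewrite setD_eq0 => sPS; have eqS : cover S = cover P.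
    by apply/eqP; rewrite eqEsubset sPS cover_subset.
  by exists S; rewrite // -eqS.
have := PSx; rewrite inE => /andP[Sx /bigcupP[H PH Hx]].
have SH : H \notin S by apply: contra Sx => SH; apply/bigcupP; exists H.
have cover_HS : cover (H |: S) = cov H :|: cover S by rewrite /cover big_setU1.
have grow : #|cover S| < #|cover (H |: S)|.
  apply: proper_card; rewrite properEneq cover_HS subsetUr andbT.
  by apply: contraNneq Sx => ->; rewrite inE Hx.
apply: (IH (H |: S)).
- suff /proper_card : cover P :\: cover (H |: S) \proper cover P :\: cover S by lia.
  rewrite properEneq setDS ?cover_subset ?subsetUr // andbT.
  by apply/eqP => eqD; move: PSx; rewrite -eqD in_setD cover_HS in_setU Hx.
- by rewrite subUset sub1set PH.
- by apply/set0Pn; exists H; rewrite setU11.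
- by rewrite cardsU1 SH; lia.
Qed.

Lemma greedy_cover P : P != set0 -> {in P, forall H, n <= #|cov H|} ->
  exists2 S : {set U}, S \subset P &
    [/\ S != set0, cover S = cover P & #|S| + n <= #|cover P| + 1].
Proof.
case/set0Pn => H PH large; apply: (greedy_cover_from (S := [set H])).
- by rewrite sub1set.
- by apply/set0Pn; exists H; rewrite set11.
- by rewrite cards1 /cover big_set1 addnC leq_add2r large.
Qed.

End Covers.

Section DSCharacter.
Variables (V : finType) (E : {set V * V}).

Lemma d_out_le_ds_family S v : ds_family E S -> d_out E v <= #|S|.
Proof.
case=> CG_S _ _ cover_E.
apply: (card_le_cover (covers := fun w (H : subdigraph V) => (v, w) \in H.2)).
  by move=> w; rewrite inE -cover_E => /bigcupP[H SH Hvw]; exists H.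
by move=> H w w' SH _ _; apply: in_CG_out (CG_S H SH).
Qed.

Lemma d_in_le_ds_family S v : ds_family E S -> d_in E v <= #|S|.
Proof.
case=> CG_S _ _ cover_E.
apply: (card_le_cover (covers := fun w (H : subdigraph V) => (w, v) \in H.2)).
  by move=> w; rewrite inE -cover_E => /bigcupP[H SH Hwv]; exists H.
by move=> H w w' SH _ _; apply: in_CG_in (CG_S H SH).
Qed.

Lemma ds_family_small (R : realType) : ds_able R E ->
  exists S, ds_family E S /\ #|S| + #|V| <= #|E| + 1.
Proof.
move=> [A [A_ge0 A_E rowA colA]]; have magicA : semimagic A 1 by [].
have [v0 _|V0] := pickP (@predT V); last first.
  exists set0; split; last by rewrite cards0 (eq_card0 V0).
  split=> [H|H||]; rewrite ?inE // big_set0; apply/setP.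
    by move=> x; have := V0 x.
  by move=> [x y]; have := V0 x.
pose P := [set perm_digraph s | s : {perm V} & [forall x, (x, s x) \in E]].
have perm_in_P (s : {perm V}) :
    (forall x, 0 < A x (s x))%R -> perm_digraph s \in P.
  by move=> A_s; apply/imsetP; exists s; rewrite // inE; apply/forallP => x; apply/A_E.
have P_CG H : H \in P -> in_CG E H /\ H.1 = [set: V].
  by case/imsetP => s /[!inE] /forallP sE ->; split; first exact: perm_digraph_in_CG.
have cover_P : cover snd P = E.
  apply/eqP; rewrite eqEsubset; apply/andP; split.
    by apply/bigcupsP => H /P_CG[CG_H _]; apply: in_CG_sub CG_H.
  apply/subsetP => -[i j] Eij.
  have [s sij A_s] := semimagic_perm_through magicA (proj2 (A_E i j) Eij).
  by apply/bigcupP; exists (perm_digraph s); rewrite ?perm_in_P //= -sij imset_f.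
have P0 : P != set0.
  have [s A_s] := semimagic_perm magicA ltr01.
  by apply/set0Pn; exists (perm_digraph s); apply: perm_in_P.
have [|S sSP [S0 cover_S small_S]] := greedy_cover (cov := snd) (n := #|V|) P0.
  by move=> _ /imsetP[s _ ->]; rewrite card_perm_digraph.
exists S; split; last by rewrite -cover_P.
have S_CG H : H \in S -> in_CG E H /\ H.1 = [set: V] by move=> /(subsetP sSP) /P_CG.
split=> [H /S_CG[]|H /S_CG[]||] //; last by rewrite -cover_P -cover_S.
have [H SH] := set0Pn _ S0; apply/eqP; rewrite eqEsubset subsetT /=.
by rewrite -(S_CG H SH).2; apply: bigcup_sup.
Qed.

End DSCharacter.

Theorem lemma3p14 (R : realType) (V : finType) (E : {set V * V}) :
  ds_able R E -> strongly_connected E ->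
  exists k : nat,
    [/\ is_ds E k,
        (maxn (\max_(v : V) d_out E v) (\max_(v : V) d_in E v) <= k)%N
      & (k <= #|E| + 1 - #|V|)%N].
Proof.
move=> dsE _; have [S0 [famS0 smallS0]] := ds_family_small dsE.
have [k [[[S [famS <-]] k_min] _]] :
    has_unique_least_element le (fun k => exists S, ds_family E S /\ #|S| = k).
  apply: dec_inh_nat_subset_has_unique_least_element => [k|]; first exact: classic.
  by exists #|S0|, S0.
have S_min S' : ds_family E S' -> #|S| <= #|S'|.
  by move=> famS'; apply/ssrnat.leP/k_min; exists S'.
exists #|S|; split.
- by split=> [|S' /S_min]; first by exists S.
- rewrite geq_max; apply/andP; split; apply/bigmax_leqP => v _.
    exact: d_out_le_ds_family.
  exact: d_in_le_ds_family.
- by have := S_min S0 famS0; lia.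
Qed.
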